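(* Let $a\in\mathit{Act}$ and let $m$ be a closed monitor. (1) If $m$ is $\mathit{no}$-free then $\mathcal{E}_v\vdash\mathit{yes}+a.m=\mathit{yes}$. (2) If $m$ contains occurrences of both $\mathit{yes}$ and $\mathit{no}$, then $\mathcal{E}_v\vdash\mathit{yes}+a.m=\mathit{yes}+a.n$ for some $\mathit{yes}$-free closed monitor $n$. (3) If $m$ is $\mathit{yes}$-free then $\mathcal{E}_v\vdash\mathit{no}+a.m=\mathit{no}$. (4) If $m$ contains occurrences of both $\mathit{yes}$ and $\mathit{no}$, then $\mathcal{E}_v\vdash\mathit{no}+a.m=\mathit{no}+a.n$ for some $\mathit{no}$-free closed monitor $n$.
   Context: Monitors: terms $m,n ::= v \mid a.m \mid m+n \mid x$ over a nonempty action set $\mathit{Act}$ and variables $x$, verdicts $v::=\mathit{end}\mid\mathit{yes}\mid\mathit{no}$; closed monitors contain no variables. A monitor is $v$-free if it contains no occurrence of the verdict $v$. $\mathcal{E}\vdash m=n$ denotes derivability by the rules of equational logic (reflexivity, symmetry, transitivity, substitution, congruence for $a.\_$ and $+$). $\mathcal{E}_v$ consists of (A1) $x+y=y+x$; (A2) $x+(y+z)=(x+y)+z$; (A3) $x+x=x$; (A4) $x+\mathit{end}=x$; and, for each $a\in\mathit{Act}$, ($E_a$) $a.\mathit{end}=\mathit{end}$; ($Y_a$) $\mathit{yes}=\mathit{yes}+a.\mathit{yes}$; ($N_a$) $\mathit{no}=\mathit{no}+a.\mathit{no}$; ($D_a$) $a.(x+y)=a.x+a.y$. *)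

From Stdlib Require Import List.

Inductive verdict : Type := vend | vyes | vno.

Inductive monitor (Act : Type) : Type :=
| mverd : verdict -> monitor Act
| mpre  : Act -> monitor Act -> monitor Act
| msum  : monitor Act -> monitor Act -> monitor Act
| mvar  : nat -> monitor Act.

Arguments mverd {Act} v.
Arguments mpre {Act} a m.
Arguments msum {Act} m n.
Arguments mvar {Act} x.

Definition mend {Act} : monitor Act := mverd vend.
Definition myes {Act} : monitor Act := mverd vyes.
Definition mno  {Act} : monitor Act := mverd vno.

Fixpoint closed {Act} (m : monitor Act) : Prop :=
  match m with
  | mverd _ => True
  | mpre _ m => closed m
  | msum m n => closed m /\ closed n
  | mvar _ => False
  end.

Fixpoint occurs {Act} (v : verdict) (m : monitor Act) : Prop :=
  match m with
  | mverd w => w = v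
  | mpre _ m => occurs v m
  | msum m n => occurs v m \/ occurs v n
  | mvar _ => False
  end.

Definition vfree {Act} (v : verdict) (m : monitor Act) : Prop := ~ occurs v m.

Fixpoint subst {Act} (s : nat -> monitor Act) (m : monitor Act) : monitor Act :=
  match m with
  | mverd v => mverd v
  | mpre a m => mpre a (subst s m)
  | msum m n => msum (subst s m) (subst s n)
  | mvar x => s x
  end.

Definition axioms (Act : Type) := monitor Act -> monitor Act -> Prop.

Inductive derives {Act} (E : axioms Act) : monitor Act -> monitor Act -> Prop :=
| d_ax    : forall l r (s : nat -> monitor Act), E l r -> derives E (subst s l) (subst s r)
| d_refl  : forall m, derives E m m
| d_sym   : forall m n, derives E m n -> derives E n m
| d_trans : forall m n p, derives E m n -> derives E n p -> derives E m p
| d_pre   : forall a m n, derives E m n -> derives E (mpre a m) (mpre a n)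
| d_sum   : forall m m' n n', derives E m m' -> derives E n n' ->
              derives E (msum m n) (msum m' n').

Definition vx {Act} : monitor Act := mvar 0.
Definition vy {Act} : monitor Act := mvar 1.
Definition vz {Act} : monitor Act := mvar 2.

Inductive Ev {Act : Type} : axioms Act :=
| A1 : Ev (msum vx vy) (msum vy vx)
| A2 : Ev (msum vx (msum vy vz)) (msum (msum vx vy) vz)
| A3 : Ev (msum vx vx) vx
| A4 : Ev (msum vx mend) vx
| Ea : forall a, Ev (mpre a mend) mend
| Ya : forall a, Ev myes (msum myes (mpre a myes))
| Na : forall a, Ev mno (msum mno (mpre a mno))
| Da : forall a, Ev (mpre a (msum vx vy)) (msum (mpre a vx) (mpre a vy)).


(* Fix a verdict v <> end for which E_v proves v = v + a.v for
   every action a (v = yes by Y_a, v = no by N_a), and write V for it.  In the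
   "context V + _" the verdict v behaves like end:
   - V + a.x = V + a.y whenever V + x = V + y, since a.V is absorbed by V and
     a.V + a.x = a.(V + x) by D_a  (context_pre);
   - V + _ is compatible with sums  (context_sum);
   - V + V = V = V + end.
   By structural induction, every closed m satisfies V + m = V + n for a closed
   v-free n obtained by erasing the occurrences of v  (erase_verdict), and if m
   contains no verdict besides end and v then V + m = V  (collapse).  Putting m
   under a prefix with context_pre gives the four claims of the theorem, taking
   v = yes for (1),(2) and v = no for (3),(4); parts (2),(4) in fact hold for
   every closed m. *)

Lemma verdict_eq_dec (w w' : verdict) : {w = w'} + {w <> w'}.
Proof. decide equality. Qed.

Section Derivations.
Variable Act : Type.
Notation D := (@derives Act Ev).

Definition subst3 (p q r : monitor Act) : nat -> monitor Act :=
  fun n => match n with 0 => p | 1 => q | _ => r end.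

Lemma D_comm p q : D (msum p q) (msum q p).
Proof. exact (d_ax Ev _ _ (subst3 p q q) A1). Qed.

Lemma D_assoc p q r : D (msum p (msum q r)) (msum (msum p q) r).
Proof. exact (d_ax Ev _ _ (subst3 p q r) A2). Qed.

Lemma D_idem p : D (msum p p) p.
Proof. exact (d_ax Ev _ _ (subst3 p p p) A3). Qed.

Lemma D_end p : D (msum p mend) p.
Proof. exact (d_ax Ev _ _ (subst3 p p p) A4). Qed.

Lemma D_pre_end a : D (mpre a mend) mend.
Proof. exact (d_ax Ev _ _ (subst3 mend mend mend) (Ea a)). Qed.

Lemma D_pre_sum a p q : D (mpre a (msum p q)) (msum (mpre a p) (mpre a q)).
Proof. exact (d_ax Ev _ _ (subst3 p q q) (Da a)). Qed.

Lemma D_yes a : D myes (msum myes (mpre a myes)).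
Proof. exact (d_ax Ev _ _ (subst3 mend mend mend) (Ya a)). Qed.

Lemma D_no a : D mno (msum mno (mpre a mno)).
Proof. exact (d_ax Ev _ _ (subst3 mend mend mend) (Na a)). Qed.

Lemma D_sum_r p q r : D p q -> D (msum p r) (msum q r).
Proof. intro H; apply d_sum; [exact H | apply d_refl]. Qed.

Lemma D_sum_l p q r : D q r -> D (msum p q) (msum p r).
Proof. intro H; apply d_sum; [apply d_refl | exact H]. Qed.

Variable v : verdict.
Notation V := (@mverd Act v).
Hypothesis V_absorbs_pre : forall a : Act, D V (msum V (mpre a V)).

Lemma absorb a x : D (msum V x) (msum V (msum (mpre a V) x)).
Proof.
  eapply d_trans; [apply D_sum_r, (V_absorbs_pre a) |].
  apply d_sym, D_assoc.
Qed.

Lemma context_pre a x y :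
  D (msum V x) (msum V y) -> D (msum V (mpre a x)) (msum V (mpre a y)).
Proof.
  intro Hxy.
  assert (Hpre : D (msum (mpre a V) (mpre a x)) (msum (mpre a V) (mpre a y))).
  { eapply d_trans; [apply d_sym, D_pre_sum |].
    eapply d_trans; [apply d_pre, Hxy | apply D_pre_sum]. }
  eapply d_trans; [apply (absorb a) |].
  eapply d_trans; [apply D_sum_l, Hpre | apply d_sym, absorb].
Qed.

Lemma context_sum x1 x2 y1 y2 :
  D (msum V x1) (msum V y1) -> D (msum V x2) (msum V y2) ->
  D (msum V (msum x1 x2)) (msum V (msum y1 y2)).
Proof.
  (* V + (x + x') = (V + x) + x', and the summands x1, x2 are swapped so that
     each one is rewritten next to V. *)
  assert (Hswap : forall x x' y, D (msum V x) (msum V y) ->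
            D (msum V (msum x x')) (msum V (msum x' y))).
  { intros x x' y H.
    eapply d_trans; [apply D_assoc |].
    eapply d_trans; [apply D_sum_r, H |].
    eapply d_trans; [apply d_sym, D_assoc | apply D_sum_l, D_comm]. }
  intros H1 H2.
  eapply d_trans; [apply Hswap, H1 | apply Hswap, H2].
Qed.

Lemma context_verdict : D (msum V V) (msum V mend).
Proof. eapply d_trans; [apply D_idem | apply d_sym, D_end]. Qed.

Lemma collapse_pre a x : D (msum V x) V -> D (msum V (mpre a x)) V.
Proof.
  intro Hx.
  eapply d_trans; [apply context_pre; eapply d_trans; [exact Hx | apply d_sym, D_end] |].
  eapply d_trans; [apply D_sum_l, D_pre_end | apply D_end].
Qed.

Hypothesis v_not_end : v <> vend.

Lemma erase_verdict m :
  closed m -> exists n, closed n /\ vfree v n /\ D (msum V m) (msum V n).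
Proof.
  induction m as [w | b m IH | m1 IH1 m2 IH2 | x]; simpl; intros Hc.
  - destruct (verdict_eq_dec w v) as [-> | Hwv].
    + exists mend; split; [exact I | split].
      * intro Hend; apply v_not_end; symmetry; exact Hend.
      * apply context_verdict.
    + exists (mverd w); split; [exact I | split; [exact Hwv | apply d_refl]].
  - destruct (IH Hc) as [n [Hnc [Hnv Hn]]].
    exists (mpre b n); split; [exact Hnc | split; [exact Hnv | apply context_pre, Hn]].
  - destruct Hc as [Hc1 Hc2].
    destruct (IH1 Hc1) as [n1 [Hc1' [Hv1 Hn1]]].
    destruct (IH2 Hc2) as [n2 [Hc2' [Hv2 Hn2]]].
    exists (msum n1 n2); split; [split; assumption |].
    split; [intros [H | H]; contradiction | apply context_sum; assumption].
  - contradiction.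
Qed.

Variable u : verdict.
Hypothesis verdict_cases : forall w, w = vend \/ w = v \/ w = u.

Lemma collapse m : closed m -> vfree u m -> D (msum V m) V.
Proof.
  unfold vfree.
  induction m as [w | b m IH | m1 IH1 m2 IH2 | x]; simpl; intros Hc Hu.
  - destruct (verdict_cases w) as [-> | [-> | ->]].
    + apply D_end.
    + apply D_idem.
    + exfalso; apply Hu; reflexivity.
  - apply collapse_pre, IH; assumption.
  - destruct Hc as [Hc1 Hc2].
    eapply d_trans; [apply context_sum with (y1 := mend) (y2 := mend) |].
    + eapply d_trans; [apply IH1 | apply d_sym, D_end]; tauto.
    + eapply d_trans; [apply IH2 | apply d_sym, D_end]; tauto.
    + eapply d_trans; [apply D_sum_l, D_end | apply D_end].
  - contradiction.
Qed.

End Derivations.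

Theorem mainTheorem5 (Act : Type) (a : Act) (m : monitor Act) (Hc : closed m) :
  (vfree vno m -> derives Ev (msum myes (mpre a m)) myes) /\
  (occurs vyes m -> occurs vno m ->
     exists n, closed n /\ vfree vyes n /\
       derives Ev (msum myes (mpre a m)) (msum myes (mpre a n))) /\
  (vfree vyes m -> derives Ev (msum mno (mpre a m)) mno) /\
  (occurs vyes m -> occurs vno m ->
     exists n, closed n /\ vfree vno n /\
       derives Ev (msum mno (mpre a m)) (msum mno (mpre a n))).
Proof.
  assert (Hyes_no : forall w, w = vend \/ w = vyes \/ w = vno) by (destruct w; auto).
  assert (Hno_yes : forall w, w = vend \/ w = vno \/ w = vyes) by (destruct w; auto).
  split; [| split; [| split]].
  - intro Hfree. apply collapse_pre; [apply D_yes |].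
    apply (collapse Act vyes (D_yes Act) vno Hyes_no m Hc Hfree).
  - intros _ _.
    destruct (erase_verdict Act vyes (D_yes Act) ltac:(discriminate) m Hc)
      as [n [Hnc [Hnv Hn]]].
    exists n; split; [exact Hnc | split; [exact Hnv | apply context_pre; [apply D_yes | exact Hn]]].
  - intro Hfree. apply collapse_pre; [apply D_no |].
    apply (collapse Act vno (D_no Act) vyes Hno_yes m Hc Hfree).
  - intros _ _.
    destruct (erase_verdict Act vno (D_no Act) ltac:(discriminate) m Hc)
      as [n [Hnc [Hnv Hn]]].
    exists n; split; [exact Hnc | split; [exact Hnv | apply context_pre; [apply D_no | exact Hn]]].
Qed.
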